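(* Let $\mathbb{C}$ be a regular Gumm category. Consider a commutative cube with top face consisting of regular epimorphisms $x\colon P\to X$, $a\colon P\to A$, $u\colon X\to U$, $a'\colon A\to U$ (with $ux=a'a$), bottom face consisting of regular epimorphisms $y\colon Z\to Y$, $b\colon Z\to B$, $v\colon Y\to V$, $b'\colon B\to V$ (with $vy=b'b$), and vertical split epimorphisms $\varphi\colon P\to Z$, $f\colon X\to Y$, $g\colon A\to B$, $w\colon U\to V$ with sections $\sigma,s,t,i$ respectively, all faces commuting (including with the sections: e.g. $x\sigma=sy$, $a\sigma=tb$, $a's=... $ i.e. the sections form a commutative cube $B$-face to top face). Assume the left face (with $a,b,\varphi,g$) and the back face (with $x,y,\varphi,f$) are pullbacks, and the top and bottom faces are right saturated. Then the front face (with $a',b',g,w$) and the right face (with $u,v,f,w$) are pullbacks.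
   Context: A regular category is a finitely complete category in which every kernel pair has a coequaliser and regular epimorphisms are stable under pullback. A commutative square of regular epimorphisms $x\colon P\to X$, $a\colon P\to A$, $u\colon X\to U$, $c\colon A\to U$ with $ux=ca$ is right saturated if the induced comparison morphism $R_a\to R_u$ between the kernel pairs of $a$ and $u$ (induced by $x$) is a regular epimorphism. For equivalence relations $R,S$ on an object $X$, $R\square S$ denotes the largest double equivalence relation on $R$ and $S$: in generalized elements, the relation on $R$ consisting of pairs $((a,b),(c,d))$ with $(a,b),(c,d)\in R$, $(a,c)\in S$, $(b,d)\in S$, with projections $\pi_1,\pi_2$ to $R$. A finitely complete category is a Gumm category if for all equivalence relations $R,S,T$ on a same object with $R\wedge S\le T\le R$, the canonical inclusion $T\square S\to R\square S$ over $T\to R$ is a discrete fibration, i.e. the squares it forms with the projections are pullbacks. *)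

Set Implicit Arguments.
Set Universe Polymorphism.

Record Category := {
  ob :> Type;
  hom : ob -> ob -> Type;
  idm : forall a, hom a a;
  comp : forall a b c, hom b c -> hom a b -> hom a c;
  comp_assoc : forall a b c d (h : hom c d) (g : hom b c) (f : hom a b),
      comp h (comp g f) = comp (comp h g) f;
  comp_id_l : forall a b (f : hom a b), comp (idm b) f = f;
  comp_id_r : forall a b (f : hom a b), comp f (idm a) = f
}.

Arguments idm {C} a : rename.
Arguments comp {C a b c} g f : rename.
Arguments hom {C} a b : rename.

Notation "g ∘ f" := (comp g f) (at level 40, left associativity).

Section Notions.
Context {C : Category}.

Definition is_terminal (T : C) : Prop :=
  forall W : C, exists h : hom W T, forall h' : hom W T, h' = h.

Definition is_pullback {A B D P : C} (f : hom A D) (g : hom B D)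
    (p1 : hom P A) (p2 : hom P B) : Prop :=
  f ∘ p1 = g ∘ p2 /\
  (forall (W : C) (h1 : hom W A) (h2 : hom W B), f ∘ h1 = g ∘ h2 ->
     exists h : hom W P, p1 ∘ h = h1 /\ p2 ∘ h = h2) /\
  (forall (W : C) (h h' : hom W P), p1 ∘ h = p1 ∘ h' -> p2 ∘ h = p2 ∘ h' -> h = h').

Definition finitely_complete : Prop :=
  (exists T : C, is_terminal T) /\
  (forall (A B D : C) (f : hom A D) (g : hom B D),
     exists (P : C) (p1 : hom P A) (p2 : hom P B), is_pullback f g p1 p2).

Definition is_kernel_pair {A B K : C} (f : hom A B) (k1 k2 : hom K A) : Prop :=
  is_pullback f f k1 k2.

Definition is_coequalizer {K A Q : C} (h1 h2 : hom K A) (q : hom A Q) : Prop :=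
  q ∘ h1 = q ∘ h2 /\
  (forall (W : C) (g : hom A W), g ∘ h1 = g ∘ h2 ->
     exists u : hom Q W, u ∘ q = g) /\
  (forall (W : C) (u u' : hom Q W), u ∘ q = u' ∘ q -> u = u').

Definition regular_epi {A Q : C} (q : hom A Q) : Prop :=
  exists (K : C) (h1 h2 : hom K A), is_coequalizer h1 h2 q.

Definition regular : Prop :=
  finitely_complete /\
  (forall (A B K : C) (f : hom A B) (k1 k2 : hom K A), is_kernel_pair f k1 k2 ->
     exists (Q : C) (q : hom A Q), is_coequalizer k1 k2 q) /\
  (forall (A B D P : C) (e : hom A B) (g : hom D B) (p1 : hom P A) (p2 : hom P D),
     regular_epi e -> is_pullback e g p1 p2 -> regular_epi p2).

Definition right_saturated {P X A U : C} (x : hom P X) (a : hom P A)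
    (u : hom X U) (c : hom A U) : Prop :=
  regular_epi x /\ regular_epi a /\ regular_epi u /\ regular_epi c /\
  u ∘ x = c ∘ a /\
  forall (Ra Ru : C) (ka1 ka2 : hom Ra P) (ku1 ku2 : hom Ru X) (k : hom Ra Ru),
    is_kernel_pair a ka1 ka2 -> is_kernel_pair u ku1 ku2 ->
    ku1 ∘ k = x ∘ ka1 -> ku2 ∘ k = x ∘ ka2 ->
    regular_epi k.

Definition jointly_monic {R X : C} (r1 r2 : hom R X) : Prop :=
  forall (W : C) (h h' : hom W R), r1 ∘ h = r1 ∘ h' -> r2 ∘ h = r2 ∘ h' -> h = h'.

(* In generalized elements: for every W, {(r1 h, r2 h) | h : W -> R} is an
   equivalence relation on hom W X. *)
Definition is_equiv_rel {R X : C} (r1 r2 : hom R X) : Prop :=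
  jointly_monic r1 r2 /\
  (forall (W : C) (z : hom W X), exists m : hom W R, r1 ∘ m = z /\ r2 ∘ m = z) /\
  (forall (W : C) (h : hom W R), exists m : hom W R, r1 ∘ m = r2 ∘ h /\ r2 ∘ m = r1 ∘ h) /\
  (forall (W : C) (h h' : hom W R), r2 ∘ h = r1 ∘ h' ->
     exists m : hom W R, r1 ∘ m = r1 ∘ h /\ r2 ∘ m = r2 ∘ h').

Definition rel_incl {T R X : C} (t1 t2 : hom T X) (r1 r2 : hom R X) (j : hom T R) : Prop :=
  r1 ∘ j = t1 /\ r2 ∘ j = t2.

(* R /\ S <= T : the intersection of R and S (as subobjects of X x X)
   factors through T; stated through its universal property. *)
Definition meet_le {R S T X : C} (r1 r2 : hom R X) (s1 s2 : hom S X)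
    (t1 t2 : hom T X) : Prop :=
  forall (W : C) (h : hom W R) (k : hom W S), r1 ∘ h = s1 ∘ k -> r2 ∘ h = s2 ∘ k ->
    exists m : hom W T, t1 ∘ m = r1 ∘ h /\ t2 ∘ m = r2 ∘ h.

(* [D] with [p1 p2 : D -> R] is R □ S: generalized elements of D are exactly
   the pairs ((a,b),(c,d)) with (a,b),(c,d) in R, (a,c),(b,d) in S. *)
Definition is_square_rel {R S X D : C} (r1 r2 : hom R X) (s1 s2 : hom S X)
    (p1 p2 : hom D R) : Prop :=
  (exists (q1 q2 : hom D S),
     s1 ∘ q1 = r1 ∘ p1 /\ s2 ∘ q1 = r1 ∘ p2 /\
     s1 ∘ q2 = r2 ∘ p1 /\ s2 ∘ q2 = r2 ∘ p2) /\
  (forall (W : C) (u v : hom W R) (z1 z2 : hom W S),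
     s1 ∘ z1 = r1 ∘ u -> s2 ∘ z1 = r1 ∘ v ->
     s1 ∘ z2 = r2 ∘ u -> s2 ∘ z2 = r2 ∘ v ->
     exists d : hom W D, p1 ∘ d = u /\ p2 ∘ d = v) /\
  jointly_monic p1 p2.

Definition gumm : Prop :=
  finitely_complete /\
  forall (X R S T : C) (r1 r2 : hom R X) (s1 s2 : hom S X) (t1 t2 : hom T X)
         (j : hom T R),
    is_equiv_rel r1 r2 -> is_equiv_rel s1 s2 -> is_equiv_rel t1 t2 ->
    meet_le r1 r2 s1 s2 t1 t2 -> rel_incl t1 t2 r1 r2 j ->
    forall (DT DR : C) (pT1 pT2 : hom DT T) (pR1 pR2 : hom DR R) (k : hom DT DR),
      is_square_rel t1 t2 s1 s2 pT1 pT2 ->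
      is_square_rel r1 r2 s1 s2 pR1 pR2 ->
      pR1 ∘ k = j ∘ pT1 -> pR2 ∘ k = j ∘ pT2 ->
      is_pullback j pR1 pT1 k /\ is_pullback j pR2 pT2 k.

End Notions.
Arguments finitely_complete C : clear implicits.
Arguments regular C : clear implicits.
Arguments gumm C : clear implicits.


(* Everything is reduced to joint monicity of (g, a') and (f, u) plus lifting
   along regular-epi covers.  For (g, a'): lift two maps into A along the left
   pullback to p1, p2 into P.  Their x-images are related by the kernel of u, so
   by right saturation of the top face they are, after a cover, the x-images of a
   pair in the kernel of a.  The Shifting Lemma, which holds in every Gumm
   category, applied to the kernels of b phi, x and a on P then transfers
   a-equality to (p1, p2); the splitting sigma of phi is what gives the needed
   inclusion ker x /\ ker (b phi) <= ker a.  Joint monicity of (f, u) follows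
   from that of (g, a') through the two given pullbacks.  For the existence
   parts one lifts along covers, using right saturation of the bottom face, and
   descends along the regular epis thanks to joint monicity. *)

Lemma comp_eq_assoc {C : Category} {A B B' D W : C} (f : hom B D) (g : hom A B)
    (f' : hom B' D) (g' : hom A B') (m : hom W A) :
  f ∘ g = f' ∘ g' -> f ∘ (g ∘ m) = f' ∘ (g' ∘ m).
Proof. intro E. rewrite !comp_assoc, E. reflexivity. Qed.

Lemma retract_cancel {C : Category} {A B W : C} (r : hom B A) (s : hom A B)
    (m : hom W A) :
  r ∘ s = idm A -> r ∘ (s ∘ m) = m.
Proof. intro E. rewrite comp_assoc, E, comp_id_l. reflexivity. Qed.

Section Kernels.
Context {C : Category}.

Definition kernel_le {Q H K : C} (h : hom Q H) (k : hom Q K) : Prop :=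
  forall (W : C) (m1 m2 : hom W Q), h ∘ m1 = h ∘ m2 -> k ∘ m1 = k ∘ m2.

Definition kernel_meet_le {Q H1 H2 K : C} (h1 : hom Q H1) (h2 : hom Q H2)
    (k : hom Q K) : Prop :=
  forall (W : C) (m1 m2 : hom W Q),
    h1 ∘ m1 = h1 ∘ m2 -> h2 ∘ m1 = h2 ∘ m2 -> k ∘ m1 = k ∘ m2.

(* Unlike [jointly_monic], the two maps may have different codomains. *)
Definition jointly_mono {A B1 B2 : C} (f1 : hom A B1) (f2 : hom A B2) : Prop :=
  forall (W : C) (m m' : hom W A), f1 ∘ m = f1 ∘ m' -> f2 ∘ m = f2 ∘ m' -> m = m'.

Lemma regular_epi_epi {A Q : C} (e : hom A Q) :
  regular_epi e -> forall (W : C) (h h' : hom Q W), h ∘ e = h' ∘ e -> h = h'.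
Proof. intros (K & k1 & k2 & _ & _ & Hmono). exact Hmono. Qed.

Lemma regular_epi_descend {W' W X Y1 Y2 : C} (e : hom W' W) (f1 : hom X Y1)
    (f2 : hom X Y2) (h1 : hom W Y1) (h2 : hom W Y2) (xi : hom W' X) :
  regular_epi e -> jointly_mono f1 f2 ->
  f1 ∘ xi = h1 ∘ e -> f2 ∘ xi = h2 ∘ e ->
  exists z : hom W X, f1 ∘ z = h1 /\ f2 ∘ z = h2.
Proof.
  intros He Hf E1 E2. pose proof He as (K & k1 & k2 & Hc & Hfactor & _).
  destruct (Hfactor X xi) as [z Hz].
  { apply Hf; rewrite !comp_assoc; [rewrite E1 | rewrite E2];
      rewrite <- !comp_assoc, Hc; reflexivity. }
  exists z. split; apply (regular_epi_epi e He); rewrite <- comp_assoc, Hz; assumption.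
Qed.

Lemma kernel_pair_equiv_rel {Q H K : C} (h : hom Q H) (k1 k2 : hom K Q) :
  is_kernel_pair h k1 k2 -> is_equiv_rel k1 k2.
Proof.
  intros (Hc & Hlift & Hmono). split; [exact Hmono |]. split; [| split].
  - intros W z. apply Hlift. reflexivity.
  - intros W m. destruct (Hlift W (k2 ∘ m) (k1 ∘ m)) as [n [n1 n2]].
    + rewrite !comp_assoc, Hc. reflexivity.
    + exists n. auto.
  - intros W m m' E. destruct (Hlift W (k1 ∘ m) (k2 ∘ m')) as [n [n1 n2]].
    + rewrite !comp_assoc, Hc, <- !comp_assoc, E, !comp_assoc, Hc. reflexivity.
    + exists n. auto.
Qed.

Lemma kernel_pair_meet_le {Q HR HS HT KR KS KT : C}
    (hR : hom Q HR) (hS : hom Q HS) (hT : hom Q HT)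
    (r1 r2 : hom KR Q) (s1 s2 : hom KS Q) (t1 t2 : hom KT Q) :
  is_kernel_pair hR r1 r2 -> is_kernel_pair hS s1 s2 -> is_kernel_pair hT t1 t2 ->
  kernel_meet_le hR hS hT -> meet_le r1 r2 s1 s2 t1 t2.
Proof.
  intros (Rc & _ & _) (Sc & _ & _) (_ & Tlift & _) RST W h k E1 E2.
  apply Tlift, RST.
  - rewrite !comp_assoc, Rc. reflexivity.
  - rewrite E1, E2, !comp_assoc, Sc. reflexivity.
Qed.

Lemma square_rel_map {X R S T DT DR : C} (r1 r2 : hom R X) (s1 s2 : hom S X)
    (t1 t2 : hom T X) (j : hom T R) (pT1 pT2 : hom DT T) (pR1 pR2 : hom DR R) :
  rel_incl t1 t2 r1 r2 j ->
  is_square_rel t1 t2 s1 s2 pT1 pT2 -> is_square_rel r1 r2 s1 s2 pR1 pR2 ->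
  exists k : hom DT DR, pR1 ∘ k = j ∘ pT1 /\ pR2 ∘ k = j ∘ pT2.
Proof.
  intros [j1 j2] ((q1 & q2 & E1 & E2 & E3 & E4) & _ & _) (_ & Rlift & _).
  apply Rlift with (z1 := q1) (z2 := q2);
    rewrite !comp_assoc; try rewrite j1; try rewrite j2; assumption.
Qed.

Section FinitelyComplete.
Hypothesis HFC : finitely_complete C.

Lemma pullback_exists {A B D : C} (f : hom A D) (g : hom B D) :
  exists (P : C) (p1 : hom P A) (p2 : hom P B), is_pullback f g p1 p2.
Proof. apply (proj2 HFC). Qed.

Lemma product_exists (H1 H2 : C) :
  exists (Pr : C) (q1 : hom Pr H1) (q2 : hom Pr H2),
    (forall (W : C) (m1 : hom W H1) (m2 : hom W H2),
       exists m, q1 ∘ m = m1 /\ q2 ∘ m = m2) /\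
    jointly_mono q1 q2.
Proof.
  destruct HFC as [[T HT] _].
  destruct (HT H1) as [t1 _]. destruct (HT H2) as [t2 _].
  destruct (pullback_exists t1 t2) as (Pr & q1 & q2 & _ & Hlift & Hmono).
  exists Pr, q1, q2. split; [| exact Hmono].
  intros W m1 m2. apply Hlift.
  destruct (HT W) as [h0 Hh0]. rewrite (Hh0 (t1 ∘ m1)), (Hh0 (t2 ∘ m2)). reflexivity.
Qed.

Lemma pairing_exists {Q H1 H2 : C} (h1 : hom Q H1) (h2 : hom Q H2) :
  exists (K : C) (h : hom Q K),
    kernel_le h h1 /\ kernel_le h h2 /\ kernel_meet_le h1 h2 h.
Proof.
  destruct (product_exists H1 H2) as (Pr & q1 & q2 & Hlift & Hmono).
  destruct (Hlift Q h1 h2) as [h [Hh1 Hh2]].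
  exists Pr, h. split; [| split].
  - intros W m1 m2 E. rewrite <- Hh1, <- !comp_assoc, E. reflexivity.
  - intros W m1 m2 E. rewrite <- Hh2, <- !comp_assoc, E. reflexivity.
  - intros W m1 m2 E1 E2. apply Hmono; rewrite !comp_assoc; [rewrite Hh1 | rewrite Hh2];
      assumption.
Qed.

(* R [] S is the kernel pair of (hS r1, hS r2) : R -> HS x HS. *)
Lemma square_rel_exists {R Q HS KS : C} (r1 r2 : hom R Q) (hS : hom Q HS)
    (s1 s2 : hom KS Q) :
  is_kernel_pair hS s1 s2 ->
  exists (D : C) (p1 p2 : hom D R), is_square_rel r1 r2 s1 s2 p1 p2.
Proof.
  intros (Sc & Slift & _).
  destruct (product_exists HS HS) as (Pr & q1 & q2 & Plift & Pmono).
  destruct (Plift R (hS ∘ r1) (hS ∘ r2)) as [c [c1 c2]].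
  destruct (pullback_exists c c) as (D & p1 & p2 & Dc & Dlift & Dmono).
  assert (E1 : hS ∘ (r1 ∘ p1) = hS ∘ (r1 ∘ p2)).
  { rewrite !comp_assoc, <- c1, <- !comp_assoc, Dc. reflexivity. }
  assert (E2 : hS ∘ (r2 ∘ p1) = hS ∘ (r2 ∘ p2)).
  { rewrite !comp_assoc, <- c2, <- !comp_assoc, Dc. reflexivity. }
  exists D, p1, p2. split; [| split].
  - destruct (Slift _ _ _ E1) as [z1 [z11 z12]].
    destruct (Slift _ _ _ E2) as [z2 [z21 z22]].
    exists z1, z2. auto.
  - intros W m1 m2 z1 z2 H1 H2 H3 H4. apply Dlift, Pmono.
    + rewrite !comp_assoc, c1, <- !comp_assoc, <- H1, <- H2, !comp_assoc, Sc. reflexivity.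
    + rewrite !comp_assoc, c2, <- !comp_assoc, <- H3, <- H4, !comp_assoc, Sc. reflexivity.
  - exact Dmono.
Qed.

End FinitelyComplete.

Lemma gumm_square_transfer (HG : gumm C) {X R S T DT DR : C}
    (r1 r2 : hom R X) (s1 s2 : hom S X) (t1 t2 : hom T X) (j : hom T R)
    (pT1 pT2 : hom DT T) (pR1 pR2 : hom DR R) :
  is_equiv_rel r1 r2 -> is_equiv_rel s1 s2 -> is_equiv_rel t1 t2 ->
  meet_le r1 r2 s1 s2 t1 t2 -> rel_incl t1 t2 r1 r2 j ->
  is_square_rel t1 t2 s1 s2 pT1 pT2 -> is_square_rel r1 r2 s1 s2 pR1 pR2 ->
  forall (W : C) (delta : hom W DR) (tau : hom W T), j ∘ tau = pR1 ∘ delta ->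
  exists tau' : hom W T, j ∘ tau' = pR2 ∘ delta.
Proof.
  intros Req Seq Teq RST Hj DTs DRs W delta tau Htau.
  destruct (square_rel_map _ _ _ _ _ _ _ _ _ _ _ Hj DTs DRs) as (k & k1 & k2).
  destruct (proj2 HG X R S T r1 r2 s1 s2 t1 t2 j Req Seq Teq RST Hj
              DT DR pT1 pT2 pR1 pR2 k DTs DRs k1 k2) as [(_ & DTlift & _) _].
  destruct (DTlift W tau delta Htau) as [e [e1 e2]].
  exists (pT2 ∘ e). rewrite <- e2, !comp_assoc, k2. reflexivity.
Qed.

Lemma kernel_shifting (HG : gumm C) {Q HR HS HT : C}
    (hR : hom Q HR) (hS : hom Q HS) (hT : hom Q HT) :
  kernel_le hT hR -> kernel_meet_le hR hS hT ->
  forall (W : C) (m1 m2 m3 m4 : hom W Q),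
    hR ∘ m1 = hR ∘ m2 -> hR ∘ m3 = hR ∘ m4 ->
    hS ∘ m1 = hS ∘ m3 -> hS ∘ m2 = hS ∘ m4 ->
    hT ∘ m1 = hT ∘ m2 -> hT ∘ m3 = hT ∘ m4.
Proof.
  intros TR RST W m1 m2 m3 m4 R12 R34 S13 S24 T12.
  pose proof (proj1 HG) as HFC.
  destruct (pullback_exists HFC hR hR) as (KR & r1 & r2 & KRp).
  destruct (pullback_exists HFC hS hS) as (KS & s1 & s2 & KSp).
  destruct (pullback_exists HFC hT hT) as (KT & t1 & t2 & KTp).
  pose proof KRp as (_ & Rlift & Rmono).
  pose proof KSp as (_ & Slift & _).
  pose proof KTp as (Tc & Tlift & _).
  destruct (Rlift KT t1 t2 (TR _ _ _ Tc)) as [j Hj].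
  destruct (square_rel_exists HFC t1 t2 hS s1 s2 KSp) as (DT & pT1 & pT2 & DTs).
  destruct (square_rel_exists HFC r1 r2 hS s1 s2 KSp) as (DR & pR1 & pR2 & DRs).
  destruct (Tlift W m1 m2 T12) as [tau [tau1 tau2]].
  destruct (Rlift W m1 m2 R12) as [rho [rho1 rho2]].
  destruct (Rlift W m3 m4 R34) as [rho' [rho'1 rho'2]].
  destruct (Slift W m1 m3 S13) as [z1 [z11 z12]].
  destruct (Slift W m2 m4 S24) as [z2 [z21 z22]].
  pose proof DRs as (_ & DRlift & _).
  destruct (DRlift W rho rho' z1 z2) as [delta [delta1 delta2]]; try congruence.
  pose proof Hj as [j1 j2].
  (* delta is ((m1, m2), (m3, m4)) in R [] S; its first component lies in T. *)
  destruct (gumm_square_transfer HG _ _ _ _ _ _ _ _ _ _ _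
              (kernel_pair_equiv_rel _ _ _ KRp) (kernel_pair_equiv_rel _ _ _ KSp)
              (kernel_pair_equiv_rel _ _ _ KTp)
              (kernel_pair_meet_le _ _ _ _ _ _ _ _ _ KRp KSp KTp RST) Hj DTs DRs
              W delta tau) as [tau' Htau'].
  { rewrite delta1. apply Rmono; rewrite comp_assoc; [rewrite j1 | rewrite j2]; congruence. }
  rewrite delta2 in Htau'.
  rewrite <- rho'1, <- rho'2, <- Htau', !(comp_assoc _ _ _ _ _ _ j), j1, j2,
    !comp_assoc, Tc.
  reflexivity.
Qed.

Section Regular.
Hypothesis HC : regular C.

Lemma regular_epi_cover {A B D : C} (e : hom A B) (g : hom D B) :
  regular_epi e ->
  exists (W : C) (p1 : hom W A) (p2 : hom W D), e ∘ p1 = g ∘ p2 /\ regular_epi p2.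
Proof.
  intros He. destruct HC as (HFC & _ & Hstable).
  destruct (pullback_exists HFC e g) as (W & p1 & p2 & Hp).
  exists W, p1, p2. split; [apply Hp |]. eapply Hstable; eauto.
Qed.

Lemma right_saturated_cover {P X A U : C} (x : hom P X) (a : hom P A)
    (u : hom X U) (c : hom A U) :
  right_saturated x a u c ->
  forall (W : C) (m1 m2 : hom W X), u ∘ m1 = u ∘ m2 ->
  exists (W' : C) (e : hom W' W) (n1 n2 : hom W' P),
    regular_epi e /\ a ∘ n1 = a ∘ n2 /\ x ∘ n1 = m1 ∘ e /\ x ∘ n2 = m2 ∘ e.
Proof.
  intros (_ & _ & _ & _ & Hsq & Hsat) W m1 m2 E.
  destruct (pullback_exists (proj1 HC) a a) as (Ka & ka1 & ka2 & Kap).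
  destruct (pullback_exists (proj1 HC) u u) as (Ku & ku1 & ku2 & Kup).
  pose proof Kap as (Kac & _ & _). pose proof Kup as (_ & Kulift & _).
  destruct (Kulift Ka (x ∘ ka1) (x ∘ ka2)) as [k [k1 k2]].
  { rewrite !comp_assoc, Hsq, <- !comp_assoc, Kac. reflexivity. }
  destruct (Kulift W m1 m2 E) as [rho [rho1 rho2]].
  destruct (regular_epi_cover k rho (Hsat _ _ _ _ _ _ _ Kap Kup k1 k2))
    as (W' & n & e & En & He).
  exists W', e, (ka1 ∘ n), (ka2 ∘ n). split; [exact He | split; [| split]].
  - rewrite !comp_assoc, Kac. reflexivity.
  - rewrite comp_assoc, <- k1, <- comp_assoc, En, comp_assoc, rho1. reflexivity.
  - rewrite comp_assoc, <- k2, <- comp_assoc, En, comp_assoc, rho2. reflexivity.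
Qed.

End Regular.

End Kernels.

Section Cube.
Context {C : Category} (HC : regular C) (HG : gumm C).
Context {P X A U Z Y B V : C}.
Context {x : hom P X} {a : hom P A} {u : hom X U} {a' : hom A U}
        {y : hom Z Y} {b : hom Z B} {v : hom Y V} {b' : hom B V}
        {phi : hom P Z} {f : hom X Y} {g : hom A B} {w : hom U V}
        {sigma : hom Z P} {s : hom Y X} {t : hom B A}.
Hypothesis Hphi : phi ∘ sigma = idm Z.
Hypothesis Htop : u ∘ x = a' ∘ a.
Hypothesis Hbot : v ∘ y = b' ∘ b.
Hypothesis Hback : f ∘ x = y ∘ phi.
Hypothesis Hleft : g ∘ a = b ∘ phi.
Hypothesis Hright : w ∘ u = v ∘ f.
Hypothesis Hback_s : x ∘ sigma = s ∘ y.
Hypothesis Hleft_s : a ∘ sigma = t ∘ b.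
Hypothesis PBleft : is_pullback b g phi a.
Hypothesis PBback : is_pullback y f phi x.
Hypothesis RStop : right_saturated x a u a'.
Hypothesis RSbot : right_saturated y b v b'.

(* For m1, m2 with equal x and b phi, the maps sigma phi m1, sigma phi m2, m1, m2
   form a shifting configuration for ker x, ker phi and ker (x, a): along sigma,
   the x- and a-values only depend on x and b phi. *)
Lemma kernel_bphi_x_le_a : kernel_meet_le (b ∘ phi) x a.
Proof.
  intros W m1 m2 Eb Ex. rewrite <- !comp_assoc in Eb.
  destruct PBback as (_ & _ & Bmono).
  destruct (pairing_exists (proj1 HG) x a) as (K & h & hx & ha & hxa).
  assert (Exs : x ∘ (sigma ∘ (phi ∘ m1)) = x ∘ (sigma ∘ (phi ∘ m2))).
  { rewrite !(comp_eq_assoc _ _ _ _ _ Hback_s), !(comp_eq_assoc _ _ _ _ _ (eq_sym Hback)), Ex.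
    reflexivity. }
  apply ha, (kernel_shifting HG x phi h hx) with
      (m1 := sigma ∘ (phi ∘ m1)) (m2 := sigma ∘ (phi ∘ m2)).
  - intros W' n1 n2 E1 E2. rewrite (Bmono _ n1 n2 E2 E1). reflexivity.
  - exact Exs.
  - exact Ex.
  - apply retract_cancel, Hphi.
  - apply retract_cancel, Hphi.
  - apply hxa; [exact Exs |].
    rewrite !(comp_eq_assoc _ _ _ _ _ Hleft_s), Eb. reflexivity.
Qed.

Lemma front_jointly_mono : jointly_mono g a'.
Proof.
  pose proof RSbot as (_ & Rb & _).
  destruct PBleft as (_ & Llift & _).
  intros W al1 al2 Eg Ea.
  destruct (regular_epi_cover HC b (g ∘ al1) Rb) as (W1 & zc & e1 & Ez & He1).
  destruct (Llift W1 zc (al1 ∘ e1)) as [p1 [p11 p12]].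
  { rewrite Ez, comp_assoc. reflexivity. }
  destruct (Llift W1 zc (al2 ∘ e1)) as [p2 [p21 p22]].
  { rewrite Ez, Eg, comp_assoc. reflexivity. }
  destruct (right_saturated_cover HC x a u a' RStop W1 (x ∘ p1) (x ∘ p2))
    as (W2 & e2 & n1 & n2 & He2 & En & En1 & En2).
  { rewrite !comp_assoc, Htop, <- !comp_assoc, p12, p22, !comp_assoc, Ea. reflexivity. }
  assert (Hp : a ∘ (p1 ∘ e2) = a ∘ (p2 ∘ e2)).
  { apply (kernel_shifting HG (b ∘ phi) x a) with (m1 := n1) (m2 := n2).
    - intros W' m1 m2 E. rewrite <- Hleft, <- !comp_assoc, E. reflexivity.
    - exact kernel_bphi_x_le_a.
    - rewrite <- Hleft, <- !comp_assoc, En. reflexivity.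
    - rewrite <- !comp_assoc, (comp_assoc _ _ _ _ _ phi p1),
        (comp_assoc _ _ _ _ _ phi p2), p11, p21.
      reflexivity.
    - rewrite En1, comp_assoc. reflexivity.
    - rewrite En2, comp_assoc. reflexivity.
    - exact En. }
  rewrite !comp_assoc, p12, p22, <- !comp_assoc in Hp.
  apply (regular_epi_epi e1 He1), (regular_epi_epi e2 He2).
  rewrite <- !comp_assoc. exact Hp.
Qed.

Lemma right_jointly_mono : jointly_mono f u.
Proof.
  pose proof RSbot as (Ry & _).
  destruct PBback as (_ & Blift & _).
  destruct PBleft as (_ & _ & Lmono).
  intros W k1 k2 Ef Eu.
  destruct (regular_epi_cover HC y (f ∘ k1) Ry) as (W1 & zc & e1 & Ez & He1).
  destruct (Blift W1 zc (k1 ∘ e1)) as [p1 [p11 p12]].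
  { rewrite Ez, comp_assoc. reflexivity. }
  destruct (Blift W1 zc (k2 ∘ e1)) as [p2 [p21 p22]].
  { rewrite Ez, Ef, comp_assoc. reflexivity. }
  assert (Ea : a ∘ p1 = a ∘ p2).
  { apply front_jointly_mono.
    - rewrite !(comp_eq_assoc _ _ _ _ _ Hleft), p11, p21. reflexivity.
    - rewrite !(comp_eq_assoc _ _ _ _ _ (eq_sym Htop)), p12, p22, !comp_assoc, Eu.
      reflexivity. }
  apply (regular_epi_epi e1 He1).
  rewrite <- p12, <- p22, (Lmono W1 p1 p2 (eq_trans p11 (eq_sym p21)) Ea). reflexivity.
Qed.

Lemma right_pullback_lift (W : C) (h1 : hom W Y) (h2 : hom W U) :
  v ∘ h1 = w ∘ h2 -> exists z : hom W X, f ∘ z = h1 /\ u ∘ z = h2.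
Proof.
  intros E.
  pose proof RStop as (_ & _ & Ru & _).
  pose proof PBback as (Bc & Blift & _).
  pose proof PBleft as (Lc & Llift & _).
  destruct (regular_epi_cover HC u h2 Ru) as (W1 & xi & e1 & Exi & He1).
  destruct (right_saturated_cover HC y b v b' RSbot W1 (f ∘ xi) (h1 ∘ e1))
    as (W2 & e2 & n1 & n2 & He2 & En & En1 & En2).
  { rewrite !comp_assoc, <- Hright, <- comp_assoc, Exi, !comp_assoc, E. reflexivity. }
  assert (E1 : y ∘ n1 = f ∘ (xi ∘ e2)) by (rewrite En1, comp_assoc; reflexivity).
  destruct (Blift W2 _ _ E1) as [q1 [q11 q12]].
  assert (E2 : b ∘ n2 = g ∘ (a ∘ q1)).
  { rewrite <- En, <- q11, (comp_eq_assoc _ _ _ _ _ Hleft). reflexivity. }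
  destruct (Llift W2 _ _ E2) as [q2 [q21 q22]].
  destruct (regular_epi_descend e2 f u (h1 ∘ e1) (h2 ∘ e1) (x ∘ q2) He2
              right_jointly_mono) as [z1 [z11 z12]].
  { rewrite (comp_eq_assoc _ _ _ _ _ Hback), q21, En2. reflexivity. }
  { rewrite (comp_eq_assoc _ _ _ _ _ Htop), q22, (comp_eq_assoc _ _ _ _ _ (eq_sym Htop)),
      q12, comp_assoc, Exi, <- comp_assoc. reflexivity. }
  exact (regular_epi_descend e1 f u h1 h2 z1 He1 right_jointly_mono z11 z12).
Qed.

Lemma front_pullback_lift (W : C) (h1 : hom W B) (h2 : hom W U) :
  b' ∘ h1 = w ∘ h2 -> exists z : hom W A, g ∘ z = h1 /\ a' ∘ z = h2.
Proof.
  intros E.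
  pose proof RSbot as (_ & Rb & _).
  pose proof PBback as (_ & Blift & _).
  destruct (regular_epi_cover HC b h1 Rb) as (W1 & zc & e1 & Ez & He1).
  destruct (right_pullback_lift W1 (y ∘ zc) (h2 ∘ e1)) as [xi [xi1 xi2]].
  { rewrite comp_assoc, Hbot, <- comp_assoc, Ez, !comp_assoc, E. reflexivity. }
  destruct (Blift W1 zc xi (eq_sym xi1)) as [p [p1 p2]].
  apply (regular_epi_descend e1 g a' h1 h2 (a ∘ p) He1 front_jointly_mono).
  - rewrite (comp_eq_assoc _ _ _ _ _ Hleft), p1. exact Ez.
  - rewrite (comp_eq_assoc _ _ _ _ _ (eq_sym Htop)), p2. exact xi2.
Qed.

End Cube.

Theorem proposition5p1 (C : Category) (HC : regular C) (HG : gumm C)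
  (P X A U Z Y B V : C)
  (* top face *)
  (x : hom P X) (a : hom P A) (u : hom X U) (a' : hom A U)
  (* bottom face *)
  (y : hom Z Y) (b : hom Z B) (v : hom Y V) (b' : hom B V)
  (* vertical split epis and their sections *)
  (phi : hom P Z) (f : hom X Y) (g : hom A B) (w : hom U V)
  (sigma : hom Z P) (s : hom Y X) (t : hom B A) (i : hom V U)
  (Hphi : phi ∘ sigma = idm Z) (Hf : f ∘ s = idm Y)
  (Hg : g ∘ t = idm B) (Hw : w ∘ i = idm V)
  (* commutativity of the cube of epis *)
  (Htop : u ∘ x = a' ∘ a) (Hbot : v ∘ y = b' ∘ b)
  (Hback : f ∘ x = y ∘ phi) (Hleft : g ∘ a = b ∘ phi)
  (Hfront : w ∘ a' = b' ∘ g) (Hright : w ∘ u = v ∘ f)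
  (* commutativity of the cube of sections *)
  (Hback_s : x ∘ sigma = s ∘ y) (Hleft_s : a ∘ sigma = t ∘ b)
  (Hfront_s : a' ∘ t = i ∘ b') (Hright_s : u ∘ s = i ∘ v)
  (* left and back faces are pullbacks *)
  (PBleft : is_pullback b g phi a) (PBback : is_pullback y f phi x)
  (* top and bottom faces are (regular epi squares and) right saturated *)
  (RStop : right_saturated x a u a') (RSbot : right_saturated y b v b') :
  is_pullback b' w g a' /\ is_pullback v w f u.
Proof.
  split; split; [exact (eq_sym Hfront) | split | exact (eq_sym Hright) | split].
  - exact (front_pullback_lift HC HG Hphi Htop Hbot Hback Hleft Hright Hback_s Hleft_s
             PBleft PBback RStop RSbot).
  - exact (front_jointly_mono HC HG Hphi Htop Hback Hleft Hback_s Hleft_s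
             PBleft PBback RStop RSbot).
  - exact (right_pullback_lift HC HG Hphi Htop Hback Hleft Hright Hback_s Hleft_s
             PBleft PBback RStop RSbot).
  - exact (right_jointly_mono HC HG Hphi Htop Hback Hleft Hback_s Hleft_s
             PBleft PBback RStop RSbot).
Qed.
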